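(* Let $\sigma\ge0$, $\delta\ge0$, $\underline\gamma>0$, and let sequences $\{\gamma_j\}_{j\ge1}$, $\{\eta_j\}_{j\ge1}$, $\{\alpha_j\}_{j\ge0}$ of reals satisfy, for every $j\ge1$, $\gamma_j\ge\underline\gamma$ and $\gamma_j\eta_j\le\alpha_{j-1}-(1+\sigma)\alpha_j+\gamma_j\delta$. Then: (a) for every $k\ge1$, $\displaystyle\min_{1\le j\le k}\eta_j\le\frac{\alpha_0-(1+\sigma)^k\alpha_k}{\sum_{j=1}^k(1+\sigma)^{j-1}\gamma_j}+\delta$; (b) if $\alpha_j\ge0$ for all $j$, then $\min_{1\le j\le k}\eta_j\le2\delta$ for every $k\ge1$ such that \[ k\ge\min\left\{\frac{1+\sigma}{\sigma}\log\left(\frac{\sigma\alpha_0}{\underline\gamma\delta}+1\right),\ \frac{\alpha_0}{\underline\gamma\delta}\right\}, \] with the convention that the first term equals the second when $\sigma=0$. *)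

From Stdlib Require Import Reals.
Open Scope R_scope.

(* min_{1 <= j <= k} eta j  (for k >= 1; for k = 0 the value eta 1 is junk). *)
Fixpoint min_upto (eta : nat -> R) (k : nat) : R :=
  match k with
  | O => eta 1%nat
  | S O => eta 1%nat
  | S k' => Rmin (min_upto eta k') (eta k)
  end.

(* sum_{j=1}^k (1+sigma)^(j-1) gamma_j   (for k >= 1) *)
Definition wsum (sigma : R) (gamma : nat -> R) (k : nat) : R :=
  sum_f_R0 (fun i => (1 + sigma) ^ i * gamma (S i)) (k - 1).

Definition threshold (sigma delta g alpha0 : R) : R :=
  if Req_EM_T sigma 0 then alpha0 / (g * delta)
  else Rmin ((1 + sigma) / sigma * ln (sigma * alpha0 / (g * delta) + 1))
            (alpha0 / (g * delta)).

(* Multiplying the j-th inequality by (1+sigma)^(j-1) makes the alpha-terms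
   telescope:  sum_j (1+sigma)^(j-1) gamma_j eta_j
   <= alpha_0 - (1+sigma)^k alpha_k + delta W_k,  with W_k = wsum sigma gamma k.
   Bounding every eta_j from below by their minimum and dividing by W_k > 0
   gives (a).  For (b), W_k >= g G_k with G_k = sum_{i<k} (1+sigma)^i, and
   both G_k >= k and sigma G_k = (1+sigma)^k - 1 hold; since
   ln(1+sigma) >= sigma/(1+sigma), either branch of the threshold forces
   G_k >= alpha_0/(g delta), i.e. alpha_0/W_k <= delta. *)

From Stdlib Require Import Reals Lra Lia Psatz.
Open Scope R_scope.

Lemma min_upto_le (eta : nat -> R) (j k : nat) :
  (1 <= j <= k)%nat -> min_upto eta k <= eta j.
Proof.
  induction k as [|[|k] IH]; intros Hjk; [lia| |].
  - replace j with 1%nat by lia. simpl. lra.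
  - change (min_upto eta (S (S k))) with (Rmin (min_upto eta (S k)) (eta (S (S k)))).
    destruct (Nat.eq_dec j (S (S k))) as [->|Hne].
    + apply Rmin_r.
    + eapply Rle_trans; [apply Rmin_l|]. apply IH. lia.
Qed.

Lemma sum_f_R0_telescope (u : nat -> R) (n : nat) :
  sum_f_R0 (fun i => u i - u (S i)) n = u 0%nat - u (S n).
Proof.
  induction n as [|n IH]; simpl; [ring|]. rewrite IH. ring.
Qed.

Lemma sum_f_R0_weighted_ge (w x : nat -> R) (m : R) (n : nat) :
  (forall i, (i <= n)%nat -> 0 <= w i /\ m <= x i) ->
  m * sum_f_R0 w n <= sum_f_R0 (fun i => w i * x i) n.
Proof.
  intros Hwx. rewrite scal_sum. apply sum_Rle. intros i Hi.
  destruct (Hwx i Hi). nra.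
Qed.

Lemma geometric_sum_ge_count (s : R) (n : nat) :
  0 <= s -> INR (S n) <= sum_f_R0 (fun i => (1 + s) ^ i) n.
Proof.
  intros Hs. rewrite <- (Rmult_1_l (INR (S n))), <- sum_cte.
  apply sum_Rle. intros i _. apply pow_R1_Rle. lra.
Qed.

Lemma geometric_sum_mul (s : R) (n : nat) :
  s * sum_f_R0 (fun i => (1 + s) ^ i) n = (1 + s) ^ (S n) - 1.
Proof.
  rewrite Rmult_comm, <- Nat.add_1_r, <- GP_finite. f_equal. ring.
Qed.

Lemma ln_1p_ge (s : R) : -1 < s -> s / (1 + s) <= ln (1 + s).
Proof.
  intros Hs. assert (H := exp_ineq1_le (- ln (1 + s))).
  rewrite exp_Ropp, exp_ln in H by lra.
  replace (s / (1 + s)) with (1 - / (1 + s)) by (field; lra). lra.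
Qed.

Lemma pow_ge_of_log_threshold (s x : R) (k : nat) :
  0 < s -> 0 <= x -> (1 + s) / s * ln (x + 1) <= INR k -> x + 1 <= (1 + s) ^ k.
Proof.
  intros Hs Hx Hk.
  assert (Hln : ln (x + 1) <= ln ((1 + s) ^ k)).
  { rewrite ln_pow by lra.
    assert (Hlog := ln_1p_ge s ltac:(lra)).
    assert (Hk0 := pos_INR k).
    apply Rle_trans with (INR k * (s / (1 + s))); [|nra].
    apply (Rmult_le_compat_r (s / (1 + s))) in Hk.
    - replace ((1 + s) / s * ln (x + 1) * (s / (1 + s))) with (ln (x + 1)) in Hk
        by (field; lra).
      exact Hk.
    - apply Rlt_le, Rdiv_lt_0_compat; lra. }
  destruct (Rle_lt_dec (x + 1) ((1 + s) ^ k)) as [Hle|Hlt]; [exact Hle|].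
  assert (ln ((1 + s) ^ k) < ln (x + 1)) by (apply ln_increasing; [apply pow_lt|]; lra).
  lra.
Qed.

Lemma threshold_le_geometric_sum (sigma delta g a : R) (n : nat) :
  0 <= sigma -> 0 < delta -> 0 < g -> 0 <= a ->
  threshold sigma delta g a <= INR (S n) ->
  a / (g * delta) <= sum_f_R0 (fun i => (1 + sigma) ^ i) n.
Proof.
  intros Hsigma Hdelta Hg Ha Hth.
  assert (Hcount := geometric_sum_ge_count sigma n Hsigma).
  destruct (Rle_lt_dec (a / (g * delta)) (INR (S n))) as [Hle|Hgt]; [lra|].
  unfold threshold in Hth.
  destruct (Req_EM_T sigma 0) as [->|Hne]; [lra|].
  assert (Hlog : (1 + sigma) / sigma * ln (sigma * a / (g * delta) + 1) <= INR (S n)).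
  { unfold Rmin in Hth. destruct (Rle_dec _ _); lra. }
  assert (Hgd : 0 < g * delta) by nra.
  assert (Hpow := pow_ge_of_log_threshold sigma (sigma * a / (g * delta)) (S n)
                    ltac:(lra) ltac:(apply Rle_mult_inv_pos; nra) Hlog).
  assert (Hmul := geometric_sum_mul sigma n).
  apply (Rmult_le_reg_l sigma); [lra|].
  replace (sigma * (a / (g * delta))) with (sigma * a / (g * delta)) by (field; lra).
  lra.
Qed.

Lemma wsum_S (sigma : R) (gamma : nat -> R) (n : nat) :
  wsum sigma gamma (S n) = sum_f_R0 (fun i => (1 + sigma) ^ i * gamma (S i)) n.
Proof. unfold wsum. simpl. now rewrite Nat.sub_0_r. Qed.

Section Recursion.

Variables (sigma delta g : R) (gamma eta alpha : nat -> R).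
Hypothesis Hsigma : 0 <= sigma.
Hypothesis Hg : 0 < g.
Hypothesis Hgamma : forall j : nat, (1 <= j)%nat -> g <= gamma j.
Hypothesis Hrec : forall j : nat, (1 <= j)%nat ->
  gamma j * eta j <= alpha (j - 1)%nat - (1 + sigma) * alpha j + gamma j * delta.

Lemma wsum_ge_geometric (n : nat) :
  g * sum_f_R0 (fun i => (1 + sigma) ^ i) n <= wsum sigma gamma (S n).
Proof.
  rewrite wsum_S, scal_sum. apply sum_Rle. intros i _.
  assert (Hpow : 0 <= (1 + sigma) ^ i) by (apply pow_le; lra).
  assert (Hgi := Hgamma (S i) ltac:(lia)). nra.
Qed.

Lemma wsum_pos (n : nat) : 0 < wsum sigma gamma (S n).
Proof.
  eapply Rlt_le_trans; [|apply wsum_ge_geometric].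
  assert (Hcount := geometric_sum_ge_count sigma n Hsigma).
  assert (0 < INR (S n)) by (apply lt_0_INR; lia).
  nra.
Qed.

Lemma weighted_sum_telescope (n : nat) :
  sum_f_R0 (fun i => (1 + sigma) ^ i * gamma (S i) * eta (S i)) n <=
  alpha 0%nat - (1 + sigma) ^ (S n) * alpha (S n) + delta * wsum sigma gamma (S n).
Proof.
  apply Rle_trans with (sum_f_R0 (fun i =>
    ((1 + sigma) ^ i * alpha i - (1 + sigma) ^ (S i) * alpha (S i))
    + (1 + sigma) ^ i * gamma (S i) * delta) n).
  - apply sum_Rle. intros i _.
    assert (Hpow : 0 <= (1 + sigma) ^ i) by (apply pow_le; lra).
    assert (Hi := Hrec (S i) ltac:(lia)).
    replace (S i - 1)%nat with i in Hi by lia.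
    simpl. nra.
  - rewrite sum_plus, sum_f_R0_telescope, wsum_S, scal_sum. right. simpl. ring.
Qed.

Lemma min_upto_mul_wsum_le (n : nat) :
  min_upto eta (S n) * wsum sigma gamma (S n) <=
  alpha 0%nat - (1 + sigma) ^ (S n) * alpha (S n) + delta * wsum sigma gamma (S n).
Proof.
  eapply Rle_trans; [|apply weighted_sum_telescope].
  rewrite wsum_S.
  apply (sum_f_R0_weighted_ge (fun i => (1 + sigma) ^ i * gamma (S i)) (fun i => eta (S i))).
  intros i Hi. split.
  - assert (Hgi := Hgamma (S i) ltac:(lia)).
    apply Rmult_le_pos; [apply pow_le|]; lra.
  - apply min_upto_le. lia.
Qed.

Lemma min_upto_le_rate (n : nat) :
  min_upto eta (S n) <=
  (alpha 0%nat - (1 + sigma) ^ (S n) * alpha (S n)) / wsum sigma gamma (S n) + delta.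
Proof.
  assert (HW := wsum_pos n).
  apply (Rmult_le_reg_r (wsum sigma gamma (S n))); [exact HW|].
  eapply Rle_trans; [apply min_upto_mul_wsum_le|].
  right. field. lra.
Qed.

Lemma alpha0_le_delta_wsum (n : nat) :
  0 < delta -> 0 <= alpha 0%nat ->
  threshold sigma delta g (alpha 0%nat) <= INR (S n) ->
  alpha 0%nat <= delta * wsum sigma gamma (S n).
Proof.
  intros Hdelta Halpha0 Hth.
  assert (Hgeo := threshold_le_geometric_sum sigma delta g (alpha 0%nat) n
                    Hsigma Hdelta Hg Halpha0 Hth).
  assert (HgW : alpha 0%nat / (g * delta) * g <= wsum sigma gamma (S n)).
  { eapply Rle_trans; [|apply wsum_ge_geometric]. nra. }
  replace (alpha 0%nat) with (delta * (alpha 0%nat / (g * delta) * g)) at 1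
    by (field; lra).
  apply Rmult_le_compat_l; lra.
Qed.

Lemma min_upto_le_twice_delta (n : nat) :
  (forall j : nat, 0 <= alpha j) -> 0 < delta ->
  threshold sigma delta g (alpha 0%nat) <= INR (S n) ->
  min_upto eta (S n) <= 2 * delta.
Proof.
  intros Halpha Hdelta Hth.
  assert (HW := wsum_pos n).
  assert (Hbound := min_upto_mul_wsum_le n).
  assert (Halpha_W := alpha0_le_delta_wsum n Hdelta (Halpha 0%nat) Hth).
  assert (Htail : 0 <= (1 + sigma) ^ S n * alpha (S n))
    by (apply Rmult_le_pos; [apply pow_le; lra | apply Halpha]).
  apply (Rmult_le_reg_r (wsum sigma gamma (S n))); [exact HW|].
  lra.
Qed.

End Recursion.

Theorem lemmaA2 (sigma delta g : R) (gamma eta alpha : nat -> R)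
  (Hsigma : 0 <= sigma) (Hdelta : 0 <= delta) (Hg : 0 < g)
  (Hgamma : forall j : nat, (1 <= j)%nat -> g <= gamma j)
  (Hrec : forall j : nat, (1 <= j)%nat ->
     gamma j * eta j <= alpha (j - 1)%nat - (1 + sigma) * alpha j + gamma j * delta) :
  (forall k : nat, (1 <= k)%nat ->
     min_upto eta k <=
       (alpha 0%nat - (1 + sigma) ^ k * alpha k) / wsum sigma gamma k + delta)
  /\
  ((forall j : nat, 0 <= alpha j) -> 0 < delta ->
     forall k : nat, (1 <= k)%nat ->
       threshold sigma delta g (alpha 0%nat) <= INR k ->
       min_upto eta k <= 2 * delta).
Proof.
  split.
  - intros [|n] Hk; [lia|].
    now apply (min_upto_le_rate sigma delta g gamma eta alpha).
  - intros Halpha Hdelta_pos [|n] Hk Hth; [lia|].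
    now apply (min_upto_le_twice_delta sigma delta g gamma eta alpha).
Qed.
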